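(* For every integer $s\ge1$, $F_{s,2}(x)=\binom{x-2}{s-1}=\frac{1}{(s-1)!}\prod_{p=2}^{s}(x-p)$. For every integer $s\ge2$, $F_{s,3}(x)=\frac{1}{(s-1)!}(x-2s)\prod_{p=3}^{s}(x-p)$ (an empty product equals $1$).
   Context: For an integer $j\ge0$, $\binom{x}{j}=x(x-1)\cdots(x-j+1)/j!$ as a polynomial in $x$, and $\binom{x}{j}=0$ for $j<0$. For integers $s\ge1$, $k\ge1$, the Moser polynomial is $F_{s,k}(x)=\sum_{p=1}^{s}(-1)^{p-1}p^{k-1}\binom{x}{s-p}$. *)

From HB Require Import structures.
From mathcomp Require Import all_boot all_order all_algebra.
Set Implicit Arguments. Unset Strict Implicit. Unset Printing Implicit Defensive.
Import Order.TTheory GRing.Theory Num.Theory.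
Local Open Scope ring_scope.

Definition binomP (q : {poly rat}) (j : nat) : {poly rat} :=
  ((j`!)%:R)^-1 *: \prod_(i < j) (q - (i%:R)%:P).

Definition binomZ (j : int) : {poly rat} :=
  match j with
  | Posz n => binomP 'X n
  | Negz _ => 0
  end.

Definition Moser (s k : nat) : {poly rat} :=
  \sum_(1 <= p < s.+1) ((-1) ^+ (p.-1) * (p ^ (k.-1))%:R) *: binomZ (s%:Z - p%:Z).

(* Write [F_{s,k} = H_s(p |-> p^(k-1))] with the alternating binomial transform
   [H_s f = sum_(p=1..s) (-1)^(p-1) f(p) binom(x, s-p)].  Splitting off the term
   [p = 1] gives [H_(s+1) f = f(1) binom(x,s) - H_s (f o succ)], and since
   [H_s] is linear in [f], Pascal's rule [binom(q,n+1) = binom(q-1,n+1) + binom(q-1,n)]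
   yields by induction [H_(n+1) 1 = binom(x-1,n)], [H_(n+1) id = binom(x-2,n)] and
   [H_(n+2) p^2 = binom(x-2,n+1) - 2 binom(x-3,n)].  Expanding the binomials as
   falling factorials gives the product formulas. *)
From HB Require Import structures.
From mathcomp Require Import all_boot all_order all_algebra.
From mathcomp Require Import zify ring.
Import Order.TTheory GRing.Theory Num.Theory.
Local Open Scope ring_scope.

Definition alt_binom_sum (s : nat) (f : nat -> rat) : {poly rat} :=
  \sum_(1 <= p < s.+1) ((-1) ^+ p.-1 * f p) *: binomZ (s%:Z - p%:Z).

Lemma Moser_alt_binom_sum s k :
  Moser s k = alt_binom_sum s (fun p => (p ^ k.-1)%:R).
Proof. by []. Qed.

Lemma alt_binom_sum0 f : alt_binom_sum 0 f = 0.
Proof. by rewrite /alt_binom_sum big_geq. Qed.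

Lemma alt_binom_sumS s f :
  alt_binom_sum s.+1 f = f 1%N *: binomP 'X s - alt_binom_sum s (f \o succn).
Proof.
rewrite /alt_binom_sum big_nat_recl //= expr0 mul1r subn1 -sumrN.
congr (_ + _); apply: eq_big_nat => p /andP[p_gt0 _].
have -> : s.+1%:Z - p.+1%:Z = s%:Z - p%:Z by lia.
case: p p_gt0 => // p _; rewrite exprS !mulN1r -scaleNr; congr (_ *: _); ring.
Qed.

Lemma alt_binom_sumD s f g :
  alt_binom_sum s (fun p => f p + g p) = alt_binom_sum s f + alt_binom_sum s g.
Proof.
rewrite /alt_binom_sum -big_split /=; apply: eq_bigr => p _.
by rewrite -scalerDl mulrDr.
Qed.

Lemma alt_binom_sumZ s a f :
  alt_binom_sum s (fun p => a * f p) = a *: alt_binom_sum s f.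
Proof.
rewrite /alt_binom_sum scaler_sumr; apply: eq_bigr => p _.
by rewrite scalerA mulrCA.
Qed.

Lemma eq_alt_binom_sum s f g : f =1 g -> alt_binom_sum s f = alt_binom_sum s g.
Proof. by move=> fg; apply: eq_bigr => p _; rewrite fg. Qed.

Lemma binomP0 q : binomP q 0 = 1.
Proof. by rewrite /binomP big_ord0 invr1 scale1r. Qed.

Lemma binomPS q n :
  binomP q n.+1 = (n.+1%:R)^-1 *: (q * binomP (q - 1) n).
Proof.
rewrite /binomP big_ord_recl subr0 factS natrM invfM -scalerA -scalerAr.
congr (_ *: (_ *: (_ * _))); apply: eq_bigr => i _.
by rewrite lift0 -natr1 polyCD polyC1 opprD addrA addrAC.
Qed.

Lemma binomP1 q : binomP q 1 = q.
Proof. by rewrite binomPS binomP0 mulr1 invr1 scale1r. Qed.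

Lemma binomPSr q n :
  binomP q n.+1 = (n.+1%:R)^-1 *: ((q - (n%:R)%:P) * binomP q n).
Proof.
by rewrite /binomP big_ord_recr factS natrM invfM -scalerA -scalerAr mulrC.
Qed.

Lemma binomP_pascal q n :
  binomP q n.+1 = binomP (q - 1) n.+1 + binomP (q - 1) n.
Proof.
have nz : (n.+1%:R : rat) != 0 by rewrite pnatr_eq0.
have -> : binomP (q - 1) n = (n.+1%:R)^-1 *: (n.+1%:R *: binomP (q - 1) n).
  by rewrite scalerA mulVf ?scale1r.
rewrite binomPS binomPSr -scalerDr -[_%:R *: _]mul_polyC -mulrDl.
congr (_ *: (_ * _)); rewrite -natr1 polyCD polyC1; ring.
Qed.

Lemma polyC_subD (q : {poly rat}) (a b : rat) : q - a%:P - b%:P = q - (a + b)%:P.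
Proof. by rewrite polyCD opprD addrA. Qed.

Lemma polyC_subS (q : {poly rat}) (a : rat) : q - a%:P - 1 = q - (a + 1)%:P.
Proof. by rewrite -polyC_subD polyC1. Qed.

Lemma alt_binom_sum_const n :
  alt_binom_sum n.+1 (fun _ => 1) = binomP ('X - 1%:P) n.
Proof.
elim: n => [|n IH].
  by rewrite alt_binom_sumS alt_binom_sum0 subr0 scale1r !binomP0.
by rewrite alt_binom_sumS scale1r IH binomP_pascal polyC1 addrK.
Qed.

Lemma alt_binom_sum_id n :
  alt_binom_sum n.+1 (fun p => p%:R) = binomP ('X - 2%:P) n.
Proof.
elim: n => [|n IH].
  by rewrite alt_binom_sumS alt_binom_sum0 subr0 scale1r !binomP0.
rewrite alt_binom_sumS scale1r (@eq_alt_binom_sum _ _ (fun p => p%:R + 1)).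
  rewrite alt_binom_sumD IH alt_binom_sum_const binomP_pascal.
  by rewrite [binomP (_ - 1) _]binomP_pascal -polyC1 polyC_subS; ring.
by move=> p; rewrite natr1.
Qed.

Lemma alt_binom_sum_sqr n :
  alt_binom_sum n.+2 (fun p => (p ^ 2)%:R) =
  binomP ('X - 2%:P) n.+1 - 2 *: binomP ('X - 3%:P) n.
Proof.
elim: n => [|n IH].
  rewrite !alt_binom_sumS alt_binom_sum0 !binomP1 !binomP0 -!mul_polyC.
  rewrite polyC1; ring.
rewrite alt_binom_sumS scale1r.
rewrite (@eq_alt_binom_sum _ _ (fun p => (p ^ 2)%:R + (2 * p%:R + 1))); last first.
  by move=> p; rewrite /= natrX -natr1; ring.
rewrite !alt_binom_sumD alt_binom_sumZ IH alt_binom_sum_id alt_binom_sum_const.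
rewrite binomP_pascal [binomP (_ - 1) n.+2]binomP_pascal.
rewrite -polyC1 polyC_subS [1 + 1]/(2 : rat).
rewrite [binomP ('X - 2%:P) n.+1]binomP_pascal polyC_subS -!mul_polyC; ring.
Qed.

Lemma binomPS_sub q (c : rat) n :
  binomP q n.+1 - c *: binomP (q - 1) n =
  (n.+1%:R)^-1 *: ((q - (c * n.+1%:R)%:P) * binomP (q - 1) n).
Proof.
have nz : (n.+1%:R : rat) != 0 by rewrite pnatr_eq0.
have -> : c *: binomP (q - 1) n =
          (n.+1%:R)^-1 *: ((c * n.+1%:R)%:P * binomP (q - 1) n).
  by rewrite mul_polyC [in RHS]scalerA mulrCA mulVf ?mulr1.
by rewrite binomPS -scalerBr -mulrBl.
Qed.

Lemma binomP_XsubC (a n : nat) :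
  binomP ('X - (a%:R)%:P) n =
  (n`!%:R)^-1 *: \prod_(a <= p < a + n) ('X - (p%:R)%:P).
Proof.
rewrite /binomP -{2}[a]add0n big_addn addKn big_mkord; congr (_ *: _).
by apply: eq_bigr => i _; rewrite natrD polyCD opprD addrA addrAC.
Qed.

Theorem mainTheorem6 :
  (forall s : nat, (1 <= s)%N ->
     Moser s 2 = binomP ('X - 2%:P) s.-1 /\
     Moser s 2 = (((s.-1)`!)%:R)^-1 *: \prod_(2 <= p < s.+1) ('X - (p%:R)%:P)) /\
  (forall s : nat, (2 <= s)%N ->
     Moser s 3 = (((s.-1)`!)%:R)^-1 *:
       (('X - ((2 * s)%:R)%:P) * \prod_(3 <= p < s.+1) ('X - (p%:R)%:P))).
Proof.
split=> [[|n] // _ | [|[|n]] // _].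
  have F2 : Moser n.+1 2 = binomP ('X - 2%:P) n.
    by rewrite Moser_alt_binom_sum -alt_binom_sum_id; apply: eq_alt_binom_sum.
  by rewrite F2 binomP_XsubC add2n.
rewrite Moser_alt_binom_sum alt_binom_sum_sqr.
have -> : 'X - 3%:P = 'X - 2%:P - 1 :> {poly rat} by rewrite polyC_subS.
rewrite binomPS_sub polyC_subS (binomP_XsubC 3) add3n -scalerAr scalerA.
rewrite factS natrM invfM polyC_subD; congr (_ *: (('X - _%:P) * _)).
by rewrite natrM -!natr1; ring.
Qed.
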